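(* Let $T(x_1,x_2,x_3)$ be a real multivariate polynomial, and suppose $p\mapsto T(p,\sqrt{p},\sqrt{1-p})$ is not the zero function on $[0,1]$. If $T(z,\sqrt{z},\sqrt{1-z})=0$ for some $z\in[0,1]$, then there exist $\delta>0$, a positive integer $k$, and a function $m(p)$ continuous on $[z-\delta,z+\delta]\cap[0,1]$ with $m(z)\neq0$, such that $T(p,\sqrt{p},\sqrt{1-p})=(p-z)^{k/2}m(p)$ for $p\in[z-\delta,z+\delta]\cap[0,1]$. *)

From HB Require Import structures.
From mathcomp Require Import all_boot all_order all_algebra.
From mathcomp Require Import all_classical all_reals all_analysis.
From mathcomp Require mpoly.
Set Implicit Arguments. Unset Strict Implicit. Unset Printing Implicit Defensive.
Import Order.TTheory GRing.Theory Num.Theory.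
Local Open Scope ring_scope.

Definition evalT (R : realType) (T : mpoly.mpoly 3 R) (p : R) : R :=
  mpoly.meval (fun i : 'I_3 => [:: p; Num.sqrt p; Num.sqrt (1 - p)]`_i) T.

(* Real reading of x^(k/2):  x^(k/2) := x^((k-1)/2) * sqrt x  for odd k
   with sqrt x read as sqrt |x| (the factor i dropped when x < 0), and
   x^(k/2) := x^(k/2) (integer power) for even k. *)
Definition halfpow (R : realType) (k : nat) (x : R) : R :=
  x ^+ k./2 * (Num.sqrt `|x|) ^+ odd k.

From HB Require Import structures.
From mathcomp Require Import all_boot all_order all_algebra.
From mathcomp Require Import all_classical all_reals all_analysis.
From mathcomp Require mpoly.
From mathcomp Require Import ring.
Import Order.TTheory GRing.Theory Num.Theory numFieldNormedType.Exports.
Local Open Scope classical_set_scope.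
Local Open Scope ring_scope.

(* Put p = sin^2 t with 0 <= t <= pi/2. The half-angle tangent
   x = tan (t/2) = sqrt p / (1 + sqrt (1 - p)) makes p, sqrt p and sqrt (1 - p)
   rational in x with denominator 1 + x^2, so T(p, sqrt p, sqrt (1 - p)) equals
   P(x) / (1 + x^2)^N for a polynomial P, which is nonzero by hypothesis.
   Writing P = (X - x(z))^j Q with Q(x(z)) <> 0 and j > 0, it remains to see
   that x(p) - x(z) is a continuous nonvanishing multiple of (p - z)^(1/2) when
   z is 0 or 1, and of p - z when 0 < z < 1. *)

(* The eqType instance of multinomials is only canonical after [Import mpoly],
   whose notations clash with those of mathcomp-analysis. *)
#[local] Canonical mpoly.mpoly_multinom__canonical__eqtype_Equality.

Section Homogenize.
Context {R : comNzRingType} {n : nat}.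

Lemma meval_homogenize (T : mpoly.mpoly n R) (D : {poly R})
    (w : 'I_n -> nat) (q : 'I_n -> {poly R}) :
  exists (P : {poly R}) (N : nat), forall (x : R) (v : 'I_n -> R),
    (forall i, (q i).[x] = v i * D.[x] ^+ w i) ->
    mpoly.meval v T * D.[x] ^+ N = P.[x].
Proof.
pose deg (m : mpoly.multinom n) := (\sum_i w i * mpoly.fun_of_multinom m i)%N.
pose N := (\max_(m <- mpoly.msupp T) deg m)%N.
exists (\sum_(m <- mpoly.msupp T) mpoly.mcoeff m T *:
          (D ^+ (N - deg m) * \prod_i q i ^+ mpoly.fun_of_multinom m i)), N.
move=> x v hq; rewrite mpoly.mevalE mulr_suml horner_sum.
apply: eq_big_seq => m m_supp.
have le_deg : (deg m <= N)%N by exact: bigop.leq_bigmax_seq.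
rewrite hornerZ hornerM horner_exp horner_prod -mulrA; congr (_ * _).
under [X in _ = _ * X]eq_bigr do rewrite horner_exp hq exprMn -exprM.
rewrite big_split /= prodrXr -/(deg m) mulrCA -exprD subnK //.
Qed.

End Homogenize.

Section WeierstrassSubstitution.
Variables (F : fieldType) (s c : F).
Hypotheses (sc1 : s ^+ 2 + c ^+ 2 = 1) (c1 : 1 + c != 0).

Lemma weierstrass_1Dsqr : 1 + (s / (1 + c)) ^+ 2 = 2 / (1 + c).
Proof.
have s2E : s ^+ 2 = 1 - c ^+ 2 by rewrite -sc1 addrK.
by rewrite expr_div_n s2E; field.
Qed.

Lemma weierstrass_sin : 2 * (s / (1 + c)) = s * (1 + (s / (1 + c)) ^+ 2).
Proof. by rewrite weierstrass_1Dsqr; field. Qed.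

Lemma weierstrass_cos : 1 - (s / (1 + c)) ^+ 2 = c * (1 + (s / (1 + c)) ^+ 2).
Proof.
have -> : (s / (1 + c)) ^+ 2 = 2 / (1 + c) - 1.
  by rewrite -weierstrass_1Dsqr addrAC subrr add0r.
by field.
Qed.

Lemma weierstrass_subr1 : s + 1 != 0 ->
  s / (1 + c) - 1 = - c * ((s + 1 + c) / ((s + 1) * (1 + c))).
Proof.
move=> s1; apply: subr0_eq.
transitivity ((s ^+ 2 + c ^+ 2 - 1) / ((s + 1) * (1 + c))).
  by field; rewrite s1 c1.
by rewrite sc1 subrr mul0r.
Qed.

(* Both s - s0 and s c0 - s0 c are s^2 - s0^2 divided by a conjugate. *)
Lemma weierstrass_subr (s0 c0 : F) : s0 ^+ 2 + c0 ^+ 2 = 1 -> 1 + c0 != 0 ->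
    s + s0 != 0 -> s * c0 + s0 * c != 0 ->
  s / (1 + c) - s0 / (1 + c0) =
    (s ^+ 2 - s0 ^+ 2) * (((s + s0)^-1 + (s * c0 + s0 * c)^-1) / ((1 + c) * (1 + c0))).
Proof.
move=> sc01 c01 ss0 sc0; apply: subr0_eq.
transitivity ((s ^+ 2 * (s0 ^+ 2 + c0 ^+ 2 - 1) - s0 ^+ 2 * (s ^+ 2 + c ^+ 2 - 1)) /
              ((s * c0 + s0 * c) * (1 + c) * (1 + c0))).
  by field; rewrite ss0 sc0 c1 c01.
by rewrite sc1 sc01 subrr !mulr0 subrr mul0r.
Qed.

End WeierstrassSubstitution.

Section TanHalf.
Context {R : realType}.
Implicit Types (p x : R) (f g : R -> R).

Lemma continuousX f j x :
  {for x, continuous f} -> {for x, continuous (fun p => f p ^+ j)}.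
Proof. exact: (fun fx => continuous_comp fx (@exprn_continuous R j (f x))). Qed.

Lemma oneDsqr_neq0 x : oneDsqr x != 0.
Proof. exact: lt0r_neq0 (lt_le_trans ltr01 (oneDsqr_ge1 x)). Qed.

Definition tan_half p := Num.sqrt p / (1 + Num.sqrt (1 - p)).

Lemma sqrt1B_neqN1 p : 1 + Num.sqrt (1 - p) != 0.
Proof. by rewrite lt0r_neq0 // ltr_pwDl ?sqrtr_ge0. Qed.

Lemma sqrt_unit_circle {p} : 0 <= p <= 1 ->
  Num.sqrt p ^+ 2 + Num.sqrt (1 - p) ^+ 2 = 1.
Proof. by case/andP=> p0 p1; rewrite !sqr_sqrtr ?subr_ge0 // addrC subrK. Qed.

Lemma continuous_sqrt1B : continuous (fun p : R => Num.sqrt (1 - p)).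
Proof.
move=> x; apply: continuous_comp; last exact: sqrt_continuous.
by apply: cvgB; [exact: cvg_cst | exact: cvg_id].
Qed.

Lemma continuous_inv_1Dsqrt1B : continuous (fun p : R => (1 + Num.sqrt (1 - p))^-1).
Proof.
move=> x; apply: cvgV; first exact: sqrt1B_neqN1.
by apply: cvgD; [exact: cvg_cst | exact: continuous_sqrt1B].
Qed.

Lemma continuous_tan_half : continuous tan_half.
Proof.
by move=> x; apply: cvgM; [exact: sqrt_continuous | exact: continuous_inv_1Dsqrt1B].
Qed.

Section UnitInterval.
Context {p : R} (p01 : 0 <= p <= 1).

Lemma tan_half_sin : 2 * tan_half p = Num.sqrt p * (1 + tan_half p ^+ 2).
Proof. exact: weierstrass_sin (sqrt_unit_circle p01) (sqrt1B_neqN1 p). Qed.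

Lemma tan_half_cos : 1 - tan_half p ^+ 2 = Num.sqrt (1 - p) * (1 + tan_half p ^+ 2).
Proof. exact: weierstrass_cos (sqrt_unit_circle p01) (sqrt1B_neqN1 p). Qed.

End UnitInterval.

Lemma evalT_tan_half (T : mpoly.mpoly 3 R) : exists (P : {poly R}) (N : nat),
  forall p, 0 <= p <= 1 -> evalT T p = P.[tan_half p] / oneDsqr (tan_half p) ^+ N.
Proof.
pose w (i : 'I_3) := nth 0%N [:: 2; 1; 1]%N i.
pose q (i : 'I_3) : {poly R} := [:: (2%:P * 'X) ^+ 2; 2%:P * 'X; 1 - 'X^2]`_i.
have [P [N PE]] := meval_homogenize T (1 + 'X^2) w q.
exists P, N => p p01.
pose v (i : 'I_3) := [:: p; Num.sqrt p; Num.sqrt (1 - p)]`_i.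
have dE : (1 + 'X^2).[tan_half p] = 1 + tan_half p ^+ 2 by rewrite !hornerE.
have hq i : (q i).[tan_half p] = v i * (1 + 'X^2).[tan_half p] ^+ w i.
  rewrite dE; case: i => -[|[|[|//]]] i3; rewrite /w /q /v /=.
  - rewrite horner_exp hornerCM hornerX (tan_half_sin p01) exprMn sqr_sqrtr //.
    by case/andP: p01.
  - by rewrite hornerCM hornerX (tan_half_sin p01).
  - by rewrite hornerD hornerN hornerXn hornerC (tan_half_cos p01).
by rewrite -(PE _ _ hq) dE mulfK // expf_neq0 ?oneDsqr_neq0.
Qed.

Lemma halfpow_sqrt k x : 0 <= x -> Num.sqrt x ^+ k = halfpow k x.
Proof.
move=> x0; rewrite /halfpow ger0_norm // -[in LHS](odd_double_half k) exprD.
by rewrite -muln2 mulnC exprM sqr_sqrtr // mulrC.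
Qed.

Lemma halfpow_sqrtN k x : x <= 0 -> Num.sqrt (- x) ^+ k = (-1) ^+ k./2 * halfpow k x.
Proof.
move=> x0; rewrite /halfpow ler0_norm // -[in LHS](odd_double_half k) exprD.
by rewrite -muln2 mulnC exprM sqr_sqrtr ?oppr_ge0 // [(- x) ^+ _]exprNn mulrC -mulrA.
Qed.

Lemma halfpow_double k x : halfpow k.*2 x = x ^+ k.
Proof. by rewrite /halfpow doubleK odd_double mulr1. Qed.

Definition halfpow_root f z := exists2 k, (0 < k)%N & exists w : R -> R,
  [/\ continuous w, w z != 0 & forall p, 0 <= p <= 1 -> f p = halfpow k (p - z) * w p].

Lemma halfpow_rootM {f g z} : halfpow_root f z -> continuous g -> g z != 0 ->
  halfpow_root (fun p => f p * g p) z.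
Proof.
move=> [k k0 [w [wc wz fE]]] gc gz; exists k => //; exists (fun p => w p * g p).
split=> [x||p p01]; first exact: cvgM (wc x) (gc x).
  by rewrite mulf_neq0.
by rewrite fE // mulrA.
Qed.

Lemma tan_half0 : tan_half 0 = 0.
Proof. by rewrite /tan_half sqrtr0 mul0r. Qed.

Lemma tan_half1 : tan_half 1 = 1.
Proof. by rewrite /tan_half subrr sqrtr0 sqrtr1 addr0 divr1. Qed.

Lemma halfpow_root_tan_half_at0 j : (0 < j)%N ->
  halfpow_root (fun p => (tan_half p - tan_half 0) ^+ j) 0.
Proof.
move=> j0; exists j => //; exists (fun p => (1 + Num.sqrt (1 - p))^-1 ^+ j); split.
- by move=> x; exact: continuousX (continuous_inv_1Dsqrt1B x).
- by rewrite expf_neq0 // invr_eq0 sqrt1B_neqN1.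
- by move=> p /andP[p0 _]; rewrite tan_half0 !subr0 exprMn halfpow_sqrt.
Qed.

Lemma halfpow_root_tan_half_at1 j : (0 < j)%N ->
  halfpow_root (fun p => (tan_half p - tan_half 1) ^+ j) 1.
Proof.
move=> j0; pose s1 p := Num.sqrt p + 1.
pose W p := (s1 p + Num.sqrt (1 - p)) / (s1 p * (1 + Num.sqrt (1 - p))).
have s1_gt0 p : 0 < s1 p by rewrite ltr_wpDl ?sqrtr_ge0.
have W0 p : W p != 0.
  rewrite mulf_neq0 ?invr_eq0 ?mulf_neq0 ?sqrt1B_neqN1 ?lt0r_neq0 //.
  by rewrite ltr_wpDr ?sqrtr_ge0.
have Wc : continuous W.
  have s1c : continuous s1.
    by move=> x; apply: cvgD; [exact: sqrt_continuous | exact: cvg_cst].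
  move=> x; apply: cvgM; first by apply: cvgD; [exact: s1c | exact: continuous_sqrt1B].
  apply: cvgV; first by rewrite mulf_neq0 ?sqrt1B_neqN1 ?lt0r_neq0.
  by apply: cvgM; [exact: s1c | apply: cvgD; [exact: cvg_cst | exact: continuous_sqrt1B]].
exists j => //; exists (fun p => (-1) ^+ j * (-1) ^+ j./2 * W p ^+ j); split.
- by move=> x; apply: cvgM; [exact: cvg_cst | exact: continuousX (Wc x)].
- by rewrite !mulf_neq0 ?expf_neq0 // oppr_eq0 oner_eq0.
move=> p p01; have /andP[_ p1] := p01.
rewrite tan_half1 /tan_half weierstrass_subr1 ?sqrt_unit_circle ?sqrt1B_neqN1 ?lt0r_neq0 //.
rewrite -/(W p) exprMn [(- Num.sqrt _) ^+ _]exprNn -(opprB p 1) halfpow_sqrtN ?subr_le0 //.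
by rewrite mulrA [_ * halfpow _ _]mulrC -!mulrA.
Qed.

Lemma halfpow_root_tan_half_interior z j : 0 < z < 1 -> (0 < j)%N ->
  halfpow_root (fun p => (tan_half p - tan_half z) ^+ j) z.
Proof.
move=> /andP[z0 z1] j0; set s0 := Num.sqrt z; set c0 := Num.sqrt (1 - z).
have s0_gt0 : 0 < s0 by rewrite sqrtr_gt0.
have c0_gt0 : 0 < c0 by rewrite sqrtr_gt0 subr_gt0.
pose A p := Num.sqrt p + s0.
pose B p := Num.sqrt p * c0 + s0 * Num.sqrt (1 - p).
pose C p := (1 + Num.sqrt (1 - p)) * (1 + c0).
pose W p := ((A p)^-1 + (B p)^-1) / C p.
have A_gt0 p : 0 < A p by rewrite ltr_wpDl ?sqrtr_ge0.
have B_gt0 p : 0 < B p.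
  have [p0|p0] := ltrP 0 p.
    have sp : 0 < Num.sqrt p by rewrite sqrtr_gt0.
    by rewrite /B ltr_pwDl ?mulr_gt0 ?mulr_ge0 ?sqrtr_ge0 // ltW.
  have cp : 0 < Num.sqrt (1 - p) by rewrite sqrtr_gt0 subr_gt0 (le_lt_trans p0).
  by rewrite /B ltr_wpDl ?mulr_gt0 ?mulr_ge0 ?sqrtr_ge0 // ltW.
have C_gt0 p : 0 < C p by rewrite mulr_gt0 ?ltr_wpDr ?sqrtr_ge0.
have W_gt0 p : 0 < W p by rewrite mulr_gt0 ?invr_gt0 ?addr_gt0 ?invr_gt0.
have Wc : continuous W.
  move=> x; have sqrt_x := @sqrt_continuous R x; have sqrt1B_x := continuous_sqrt1B x.
  apply: cvgM; last first.
    apply: cvgV; first by rewrite gt_eqF.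
    by apply: cvgM; [apply: cvgD; [exact: cvg_cst | exact: sqrt1B_x] | exact: cvg_cst].
  apply: cvgD; (apply: cvgV; first by rewrite gt_eqF).
    by apply: cvgD; [exact: sqrt_x | exact: cvg_cst].
  by apply: cvgD; apply: cvgM; (exact: cvg_cst || exact: sqrt_x || exact: sqrt1B_x).
exists j.*2; first by rewrite double_gt0.
exists (fun p => W p ^+ j); split.
- by move=> x; exact: continuousX (Wc x).
- by rewrite expf_neq0 // gt_eqF.
move=> p p01; have /andP[p0 _] := p01.
rewrite halfpow_double -exprMn /tan_half weierstrass_subr ?sqrt_unit_circle ?sqrt1B_neqN1 //.
- by rewrite !sqr_sqrtr // ltW.
- by rewrite !ltW.
- exact: lt0r_neq0 (A_gt0 p).
- exact: lt0r_neq0 (B_gt0 p).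
Qed.

Lemma halfpow_root_tan_half z j : 0 <= z <= 1 -> (0 < j)%N ->
  halfpow_root (fun p => (tan_half p - tan_half z) ^+ j) z.
Proof.
case/andP=> z0 z1 j0.
have [<-|z_neq0] := eqVneq 0 z; first exact: halfpow_root_tan_half_at0.
have [->|z_neq1] := eqVneq z 1; first exact: halfpow_root_tan_half_at1.
by apply: halfpow_root_tan_half_interior; rewrite // !lt_neqAle z0 z1 z_neq0 z_neq1.
Qed.

End TanHalf.

Theorem lemma3 (R : realType) (T : mpoly.mpoly 3 R) (z : R) :
  (exists p : R, 0 <= p <= 1 /\ evalT T p != 0) ->
  0 <= z <= 1 -> evalT T z = 0 ->
  exists delta : R, 0 < delta /\
  exists k : nat, (0 < k)%N /\
  exists m : R -> R,
    {within `[z - delta, z + delta] `&` `[0, 1], continuous m} /\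
    m z != 0 /\
    forall p : R, z - delta <= p <= z + delta -> 0 <= p <= 1 ->
      evalT T p = halfpow k (p - z) * m p.
Proof.
move=> [p0 [p0_01 Tp0]] z01 Tz.
have [P [N TE]] := evalT_tan_half T.
have P_neq0 : P != 0 by apply: contraNneq Tp0 => P0; rewrite TE // P0 horner0 mul0r.
have [j [Q]] := multiplicity_XsubC P (tan_half z); rewrite P_neq0 /= => Qz PE.
have j0 : (0 < j)%N.
  rewrite lt0n; apply: contraNneq Qz => j0; apply/eqP.
  move: Tz; rewrite TE // PE j0 mulr1 => /eqP.
  by rewrite mulf_eq0 invr_eq0 expf_eq0 (negbTE (oneDsqr_neq0 _)) andbF orbF => /eqP.
pose cofactor p := Q.[tan_half p] / oneDsqr (tan_half p) ^+ N.
have cofactor_cont : continuous cofactor.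
  move=> x; have tx := continuous_tan_half x.
  apply: cvgM; first exact: (continuous_comp tx (@continuous_horner R Q _)).
  apply: cvgV; first by rewrite expf_neq0 ?oneDsqr_neq0.
  exact: continuousX (continuous_comp tx (@continuous_oneDsqr R _)).
have [|k k0 [m [mc mz mE]]] :=
  halfpow_rootM (halfpow_root_tan_half z j z01 j0) cofactor_cont.
  by rewrite mulf_neq0 ?invr_eq0 ?expf_neq0 ?oneDsqr_neq0.
exists 1; split=> //; exists k; split=> //; exists m.
split; first exact: continuous_subspaceT.
split=> // p _ p01; rewrite TE // PE hornerM horner_exp hornerXsubC -mE //.
by rewrite [Q.[_] * _]mulrC -mulrA.
Qed.
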